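(* Let $k\ge\ell\ge1$ be integers with $k+\ell\ge6$ and let $G$ be a finite digraph. For every pair of non-adjacent vertices $x\in X$, $y\in Y$, $$s(x,y)\le\frac{m-1}{(m+1)\binom{m}{k}}(\alpha+\beta)(1-D)^{m-2}.$$
   Context: Put $m=k+\ell$. Digraphs are finite, without loops; $xy$ denotes an arc from $x$ to $y$; two vertices are adjacent if at least one of $xy,yx$ is an arc. The oriented star $S_{k,\ell}$ has a center $c$, a set $O$ of $k$ out-leaves and a set $I$ of $\ell$ in-leaves; its arcs are exactly $co$ ($o\in O$) and $ic$ ($i\in I$). For a digraph $G$ on $n$ vertices, let $\phi$ be a uniformly random map from $V(S_{k,\ell})$ to $V(G)$ (all $n^{m+1}$ maps equally likely), and let $\mathcal S$ be the set of maps $\phi$ that are isomorphisms from $S_{k,\ell}$ onto $G[\mathrm{Im}\,\phi]$ (in particular injective); $s(x,y)=\Pr[\phi\in\mathcal S\mid \{x,y\}\subseteq\mathrm{Im}\,\phi]$. For $A\subseteq V(G)$, $\rho_A(v)$ is the number of vertices of $A$ adjacent to $v$ divided by $n$, and $\rho(v)=\rho_{V(G)}(v)$. $X=\{v:\rho(v)\ge1/2\}$, $Y=V(G)\setminus X$, $\alpha=|X|/n$, $D=\min_{x\in X}\rho(x)$, $\beta=\max_{y\in Y}\rho_Y(y)$. *)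

From HB Require Import structures.
From mathcomp Require Import all_boot all_order all_algebra.
Set Implicit Arguments. Unset Strict Implicit. Unset Printing Implicit Defensive.
Import Order.TTheory GRing.Theory Num.Theory.
Local Open Scope ring_scope.

(* A digraph on a finite vertex type V is an arc relation [arc : rel V]
   (arc u v means there is an arc u -> v); loops are excluded by a separate
   hypothesis [irreflexive arc] in the theorem. *)

(* Oriented star S_{k,l} on vertex set 'I_(k+l).+1 : vertex 0 is the centre,
   vertices 1..k are the out-leaves, vertices k+1..k+l the in-leaves. *)
Definition star_arc (k l : nat) : rel 'I_(k + l).+1 :=
  fun u v => ((val u == 0%N) && (1 <= val v <= k)%N)
          || ((val v == 0%N) && (k < val u)%N).

Section Digraph.
Variables (V : finType) (arc : rel V).

Definition adjacent (u v : V) : bool := arc u v || arc v u.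

Definition is_star_copy (k l : nat) (phi : {ffun 'I_(k + l).+1 -> V}) : bool :=
  injectiveb phi &&
  [forall u, forall v, star_arc u v == arc (phi u) (phi v)].

(* s(x,y) = Pr[phi in S | {x,y} subset Im phi], phi uniform among all maps. *)
Definition s_prob (R : realFieldType) (k l : nat) (x y : V) : R :=
  (#|[set phi : {ffun 'I_(k + l).+1 -> V} |
       [&& is_star_copy phi, x \in codom phi & y \in codom phi]]|%:R)
  / (#|[set phi : {ffun 'I_(k + l).+1 -> V} |
       (x \in codom phi) && (y \in codom phi)]|%:R).

Definition rho_in (R : realFieldType) (A : {set V}) (v : V) : R :=
  #|[set a in A | adjacent a v]|%:R / #|V|%:R.

Definition rho (R : realFieldType) (v : V) : R := rho_in R [set: V] v.

Definition Xset (R : realFieldType) : {set V} :=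
  [set v | (1 / 2 : R) <= rho R v].

Definition Yset (R : realFieldType) : {set V} := ~: Xset R.

Definition alpha (R : realFieldType) : R := #|Xset R|%:R / #|V|%:R.

(* D = min_{x in X} rho(x); since rho <= 1 the neutral element 1 is harmless
   whenever X is nonempty (which is the case in the theorem). *)
Definition Dmin (R : realFieldType) : R :=
  \big[Order.min/1]_(x in Xset R) rho R x.

(* beta = max_{y in Y} rho_Y(y); values are >= 0 so neutral element 0 is
   harmless whenever Y is nonempty. *)
Definition betamax (R : realFieldType) : R :=
  \big[Order.max/0]_(y in Yset R) rho_in R (Yset R) y.

End Digraph.

From HB Require Import structures.
From mathcomp Require Import all_boot all_order all_algebra.
From mathcomp Require Import zify ring lra.
Import Order.TTheory GRing.Theory Num.Theory.

(* Write n = |V|, M = k + l, N = #{v | v not adjacent to x} (x included) and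
   s(x,y) = a / b, where a counts the maps 'I_(M+1) -> V that are star copies
   through x and y and b counts the maps whose image contains x and y.
   - Star copies: x and y are non-adjacent, hence both leaves; the centre is a
     neighbour of y, the leaf set is an M-set of non-neighbours of x containing
     x and y, and once centre and leaf set are fixed the leaves can be labelled
     in at most k! l! ways.  So  a <= |N(y)| * C(N-2, M-2) * k! * l!.
   - By inclusion-exclusion b = n^(M+1) - 2 (n-1)^(M+1) + (n-2)^(M+1), a second
     difference of t |-> t^(M+1), hence  b >= (M+1) M (n-2)^(M-1).
   - As x is in X, 2N <= n, whence ((N-2)/N)^(M-2) <= ((n-2)/n)^(M-1).  With
     C(N-2,M-2)(M-2)! <= (N-2)^(M-2) and C(M,k) k! l! = M! this gives
     a/b <= (M-1)/((M+1) C(M,k)) * (|N(y)|/n) * (N/n)^(M-2).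
   - Finally |N(y)|/n <= alpha + beta and N/n = 1 - rho(x) <= 1 - D. *)

Set Implicit Arguments.
Unset Strict Implicit.
Unset Printing Implicit Defensive.

Lemma leq_expn2r m n e : m <= n -> m ^ e <= n ^ e.
Proof. by case: e => [|e] // le_mn; rewrite leq_exp2r. Qed.

Lemma ffact_leq_expn n m : n ^_ m <= n ^ m.
Proof.
elim: m => [|m IHm]; first by rewrite ffactn0 expn0.
by rewrite ffactnSr expnSr leq_mul // leq_subr.
Qed.

(* Injecting k and l points into two sets of total size k + l: the product
   of falling factorials is k! l! if the sizes are exactly k and l, else 0. *)
Lemma ffact_pair_leq o i k l : o + i = k + l -> o ^_ k * i ^_ l <= k`! * l`!.
Proof.
move=> oi_kl; have [o_lt_k | k_le_o] := ltnP o k; first by rewrite ffact_small.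
have [i_lt_l | l_le_i] := ltnP i l; first by rewrite (ffact_small i_lt_l) muln0.
have -> : o = k by lia.
have -> : i = l by lia.
by rewrite !ffactnn.
Qed.

Lemma expnS_lower a M : a ^ M.+1 + M.+1 * a ^ M <= (a + 1) ^ M.+1.
Proof.
elim: M => [|M IHM]; first by rewrite !expn1 expn0; lia.
rewrite (expnS a M.+1) (expnS (a + 1) M.+1).
move: IHM; rewrite (expnS a M); set p := a ^ M; set q := (a + 1) ^ M.+1 => IHM.
have := leq_mul (leqnn (a + 1)) IHM; nia.
Qed.

Lemma expn_second_difference t M :
  2 * (t + 1) ^ M.+2 + M.+2 * M.+1 * t ^ M <= (t + 2) ^ M.+2 + t ^ M.+2.
Proof.
elim: M => [|M IHM]; first by rewrite !expnS !expn0; nia.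
have bern := expnS_lower (t + 1) M.+1.
rewrite (_ : t + 1 + 1 = t + 2) in bern; last lia.
have tp_le : t ^ M.+1 <= (t + 1) ^ M.+1 by apply: leq_expn2r; lia.
move: IHM bern tp_le; rewrite !expnS.
set u := (t + 1) ^ M; set w := (t + 2) ^ M; set p := t ^ M => IHM bern tp_le.
have := leq_mul (leqnn t) IHM.
have := leq_mul (leqnn 2) bern.
have := leq_mul (leqnn (2 * M.+2)) tp_le.
nia.
Qed.

(* If 2N <= n then ((N-2)/N)^p <= ((n-2)/n)^(p+1): the base inequality
   (N-2)/N <= ((n-2)/n)^2 raised to the p-th power, and (n-2)/n <= 1. *)
Lemma ratio_expn_shift N n p : 2 <= N -> N.*2 <= n -> 0 < p ->
  (N - 2) ^ p * n ^ p.+1 <= N ^ p * (n - 2) ^ p.+1.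
Proof.
move=> N_ge2 n_ge2N p_gt0.
have base : (N - 2) * (n * n) <= N * ((n - 2) * (n - 2)) by nia.
have powp := leq_expn2r p base; rewrite !expnMn in powp.
have np_gt0 : 0 < n ^ p.-1 by rewrite expn_gt0; lia.
rewrite -(leq_pmul2r np_gt0).
have shift m : m ^ p.+1 * m ^ p.-1 = m ^ p * m ^ p.
  by rewrite -!expnD; congr (_ ^ _); lia.
rewrite -mulnA shift; apply: (leq_trans powp).
have smaller : (n - 2) ^ p.-1 <= n ^ p.-1 by apply: leq_expn2r; lia.
apply: leq_trans (leq_mul (leqnn (N ^ p * (n - 2) ^ p.+1)) smaller).
by rewrite -mulnA shift.
Qed.

Lemma card_dep_pairs (T1 T2 : finType) (A : {set T1}) (L : T1 -> {set T2}) :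
  #|[set t : T1 * T2 | (t.1 \in A) && (t.2 \in L t.1)]| = \sum_(a in A) #|L a|.
Proof.
transitivity (\sum_(a in A) \sum_(b in L a) 1); last first.
  by apply: eq_bigr => a _; rewrite sum1_card.
by rewrite pair_big_dep /= sum1dep_card.
Qed.

(* m-subsets of B containing P correspond, via S |-> S \ P, to
   (m - |P|)-subsets of B \ P. *)
Lemma card_supersets_leq (T : finType) (B P : {set T}) m :
  #|[set S : {set T} | [&& S \subset B, P \subset S & #|S| == m]]|
    <= 'C(#|B :\: P|, m - #|P|).
Proof.
set SS := [set S : {set T} | _].
have inj : {in SS &, injective (fun S => S :\: P)}.
  move=> S1 S2; rewrite !inE => /and3P [_ P1 _] /and3P [_ P2 _] E.
  by rewrite -(setID S1 P) -(setID S2 P) E (setIidPr P1) (setIidPr P2).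
rewrite -(card_in_imset inj) -cards_draws; apply: subset_leq_card.
apply/subsetP => S' /imsetP [S]; rewrite !inE => /and3P [SB PS /eqP cS] ->.
by rewrite setSD //= cardsD (setIidPr PS) cS.
Qed.

Lemma card_ffun_hitting_pair (D T : finType) (x y : T) : x != y ->
  #|[set f : {ffun D -> T} | (x \in codom f) && (y \in codom f)]|
    + 2 * (#|T| - 1) ^ #|D| = #|T| ^ #|D| + (#|T| - 2) ^ #|D|.
Proof.
move=> xy.
have avoid (A : {set T}) :
    #|[set f : {ffun D -> T} | f \in ffun_on (mem A)]| = #|A| ^ #|D|.
  by rewrite cardsE card_ffun_on.
have missing v (f : {ffun D -> T}) :
    (v \notin codom f) = (f \in ffun_on (mem [set~ v])).
  apply/idP/ffun_onP => [vf d | fv].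
    by rewrite in_setC1; apply: contra vf => /eqP <-; exact: codom_f.
  by apply/codomP => -[d Ed]; move: (fv d); rewrite -Ed in_setC1 eqxx.
set B := [set f | _].
set Ax := [set f : {ffun D -> T} | f \in ffun_on (mem [set~ x])].
set Ay := [set f : {ffun D -> T} | f \in ffun_on (mem [set~ y])].
have compl : ~: B = Ax :|: Ay by apply/setP => f; rewrite !inE negb_and !missing.
have both :
    Ax :&: Ay = [set f : {ffun D -> T} | f \in ffun_on (mem ([set~ x] :&: [set~ y]))].
  apply/setP => f; rewrite !inE.
  apply/andP/ffun_onP => [[/ffun_onP fx /ffun_onP fy] d | fxy].
    by rewrite in_setI fx fy.
  by split; apply/ffun_onP => d; move: (fxy d); rewrite in_setI => /andP [].
have c2 : #|[set~ x] :&: [set~ y]| = #|T| - 2.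
  by have := cardsD1 y [set~ x]; rewrite in_setC1 eq_sym xy cardsC1 setDE /=; lia.
have capAx : #|Ax :&: Ay| <= #|Ax| by apply/subset_leq_card/subsetIl.
have := cardsC B; rewrite compl cardsU card_ffun.
rewrite both !avoid !cardsC1 c2 in capAx *.
lia.
Qed.

(* The count above is a second difference, hence at least
   d (d-1) (|T|-2)^(d-2) for d = |D| >= 2. *)
Lemma card_ffun_hitting_pair_lower (D T : finType) (x y : T) :
  x != y -> 2 <= #|D| ->
  #|D| * #|D|.-1 * (#|T| - 2) ^ (#|D| - 2)
    <= #|[set f : {ffun D -> T} | (x \in codom f) && (y \in codom f)]|.
Proof.
move=> xy D_ge2; have := card_ffun_hitting_pair D xy.
have T_ge2 : 2 <= #|T| by have := max_card [set x; y]; rewrite cards2 xy.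
have [M ->] : exists M, #|D| = M.+2 by exists (#|D| - 2); lia.
have [t ->] : exists t, #|T| = t + 2 by exists (#|T| - 2); lia.
rewrite addnK subn2 /= (_ : t + 2 - 1 = t + 1); last lia.
move=> hitting; have := expn_second_difference t M.
by rewrite -hitting addnC leq_add2r.
Qed.

Section StarCopies.
Variables (V : finType) (arc : rel V) (k l : nat).
Local Notation Star := 'I_(k + l).+1.

Lemma star_arc_leaves (i j : Star) : i != ord0 -> j != ord0 -> star_arc i j = false.
Proof. by rewrite /star_arc -!val_eqE /= => /negPf -> /negPf ->. Qed.

Lemma star_arc_centre (i : Star) : i != ord0 -> star_arc ord0 i || star_arc i ord0.
Proof. by rewrite /star_arc -val_eqE /=; case: i => [i lt_i] /=; lia. Qed.

Definition out_leaf (i : 'I_k) : Star := lift ord0 (lshift l i).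
Definition in_leaf (j : 'I_l) : Star := lift ord0 (rshift k j).

Lemma star_arc_out_leaf (i : 'I_k) : star_arc ord0 (out_leaf i).
Proof. by rewrite /star_arc /= /bump /=; case: i => [i lt_i] /=; lia. Qed.

Lemma star_arc_in_leaf (j : 'I_l) : star_arc ord0 (in_leaf j) = false.
Proof. by rewrite /star_arc /= /bump /=; case: j => [j lt_j] /=; lia. Qed.

Lemma star_copy_arc (phi : {ffun Star -> V}) u v :
  is_star_copy arc phi -> arc (phi u) (phi v) = star_arc u v.
Proof. by case/andP => _ /forallP /(_ u) /forallP /(_ v) /eqP. Qed.

Lemma star_copy_inj (phi : {ffun Star -> V}) : is_star_copy arc phi -> injective phi.
Proof. by case/andP => /injectiveP. Qed.

Lemma star_copy_nonadjacent_leaf (phi : {ffun Star -> V}) i j :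
  is_star_copy arc phi -> i != j -> ~~ adjacent arc (phi i) (phi j) -> i != ord0.
Proof.
move=> copy ij; apply: contraNneq => i0; move: ij; rewrite {}i0 => j_ne0.
by rewrite /adjacent !star_copy_arc // star_arc_centre // eq_sym.
Qed.

Variables (x y : V).
Hypothesis x_ne_y : x != y.
Hypothesis xy_nonadj : ~~ adjacent arc x y.

Definition star_copies_through : {set {ffun Star -> V}} :=
  [set phi | [&& is_star_copy arc phi, x \in codom phi & y \in codom phi]].

Definition y_nbrs : {set V} := [set c | adjacent arc c y].
Definition x_nonnbrs : {set V} := [set v | ~~ adjacent arc v x].

Definition leaf_sets : {set {set V}} :=
  [set S : {set V} | [&& S \subset x_nonnbrs, [set x; y] \subset S & #|S| == (k + l)%N]].

Definition out_slots (a : V * {set V}) : pred V := fun v => (v \in a.2) && arc a.1 v.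
Definition in_slots (a : V * {set V}) : pred V := fun v => (v \in a.2) && ~~ arc a.1 v.

Lemma card_slots a : #|out_slots a| + #|in_slots a| = #|a.2|.
Proof.
rewrite -(cardID (arc a.1) (mem a.2)); congr (_ + _).
by apply: eq_card => v; rewrite [in LHS]unfold_in !inE /in_slots andbC.
Qed.

Definition labellings (a : V * {set V}) :
    {set {ffun 'I_k -> V} * {ffun 'I_l -> V}} :=
  setX [set f : {ffun 'I_k -> V} in ffun_on (out_slots a) | injectiveb f]
       [set g : {ffun 'I_l -> V} in ffun_on (in_slots a) | injectiveb g].

Definition decompose (phi : {ffun Star -> V}) :=
  ((phi ord0, phi @: [set~ ord0]),
   ([ffun i => phi (out_leaf i)], [ffun j => phi (in_leaf j)])).

(* Since ord0, out_leaf and in_leaf cover the star, decompose is injective. *)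
Lemma decompose_inj : injective decompose.
Proof.
move=> phi psi [centre _ out_eq in_eq]; apply/ffunP => p.
case: (unliftP ord0 p) => [q ->|->] //; case: (splitP q) => [i qi|j qj].
  have -> : q = lshift l i by apply: val_inj.
  by have := congr1 (fun f : {ffun 'I_k -> V} => f i) out_eq; rewrite !ffunE.
have -> : q = rshift k j by apply: val_inj.
by have := congr1 (fun g : {ffun 'I_l -> V} => g j) in_eq; rewrite !ffunE.
Qed.

Lemma decompose_mem phi : phi \in star_copies_through ->
  ((decompose phi).1 \in setX y_nbrs leaf_sets) &&
  ((decompose phi).2 \in labellings (decompose phi).1).
Proof.
rewrite inE => /and3P [copy /codomP [i xi] /codomP [j yj]].
have inj := star_copy_inj copy.
have ij : i != j by apply: contraNneq x_ne_y => ij; rewrite xi yj ij.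
have i_leaf : i != ord0 by apply: (star_copy_nonadjacent_leaf copy ij); rewrite -xi -yj.
have j_leaf : j != ord0.
  have ji : j != i by rewrite eq_sym.
  by apply: (star_copy_nonadjacent_leaf copy ji); rewrite /adjacent orbC -xi -yj.
have leaf_in q : q != ord0 -> phi q \in phi @: [set~ ord0].
  by move=> q0; rewrite imset_f ?in_setC1.
rewrite /= !in_setX; apply/andP; split; apply/andP; split.
- by rewrite inE yj /adjacent !star_copy_arc // star_arc_centre.
- rewrite inE xi yj card_imset // cardsC1 card_ord eqxx andbT; apply/andP; split.
    apply/subsetP => v /imsetP [q]; rewrite in_setC1 => q0 ->.
    by rewrite inE xi /adjacent !star_copy_arc // !star_arc_leaves.
  by apply/subsetP => v; rewrite !inE => /orP [] /eqP ->; apply: leaf_in.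
- rewrite inE; apply/andP; split; last first.
    by apply/injectiveP => q q'; rewrite !ffunE => /inj /lift_inj /lshift_inj.
  apply/ffun_onP => q.
  rewrite ffunE unfold_in /= star_copy_arc // star_arc_out_leaf andbT.
  by apply: leaf_in; rewrite eq_sym neq_lift.
- rewrite inE; apply/andP; split; last first.
    by apply/injectiveP => q q'; rewrite !ffunE => /inj /lift_inj /rshift_inj.
  apply/ffun_onP => q.
  rewrite ffunE unfold_in /= star_copy_arc // star_arc_in_leaf andbT.
  by apply: leaf_in; rewrite eq_sym neq_lift.
Qed.

Lemma card_labellings_leq a : a.2 \in leaf_sets -> #|labellings a| <= k`! * l`!.
Proof.
rewrite inE => /and3P [_ _ /eqP card_S].
rewrite /labellings cardsX !card_inj_ffuns_on !card_ord; apply: ffact_pair_leq.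
by rewrite card_slots.
Qed.

(* Counting the decompositions fibrewise over (centre, leaf set). *)
Lemma card_star_copies_leq :
  #|star_copies_through| <= #|y_nbrs| * #|leaf_sets| * (k`! * l`!).
Proof.
rewrite -(card_imset _ decompose_inj) -cardsX -sum_nat_const.
apply: (leq_trans (_ : _ <= \sum_(a in setX y_nbrs leaf_sets) #|labellings a|)).
  rewrite -card_dep_pairs; apply/subset_leq_card/subsetP => t /imsetP [phi phi_in ->].
  by rewrite inE; apply: decompose_mem.
apply: leq_sum => -[c S]; rewrite in_setX => /andP [_ S_leaf].
exact: (card_labellings_leq (a := (c, S))).
Qed.

Hypothesis arc_irrefl : irreflexive arc.

(* Without loops, x is a non-neighbour of itself, and y is one by assumption. *)
Lemma pair_sub_x_nonnbrs : [set x; y] \subset x_nonnbrs.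
Proof.
apply/subsetP => v; rewrite !inE => /orP [] /eqP ->.
  by rewrite /adjacent arc_irrefl.
by rewrite /adjacent orbC.
Qed.

Lemma card_leaf_sets_leq : #|leaf_sets| <= 'C(#|x_nonnbrs| - 2, k + l - 2).
Proof.
apply: leq_trans (card_supersets_leq x_nonnbrs [set x; y] (k + l)) _.
by rewrite cardsD (setIidPr pair_sub_x_nonnbrs) cards2 x_ne_y.
Qed.

Lemma card_star_copies_through_leq :
  #|star_copies_through| <=
    #|y_nbrs| * 'C(#|x_nonnbrs| - 2, k + l - 2) * (k`! * l`!).
Proof.
apply: (leq_trans card_star_copies_leq).
by rewrite leq_mul2r leq_mul2l card_leaf_sets_leq !orbT.
Qed.

End StarCopies.

Lemma fact_sub2 m : 2 <= m -> m`! = m * (m - 1) * (m - 2)`!.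
Proof. by case: m => [|[|m]] // _; rewrite !factS !subSS !subn0 mulnA. Qed.

Lemma star_ratio_nat k l n N ny a b : 3 <= k + l -> 2 <= N -> N.*2 <= n ->
  a <= ny * 'C(N - 2, k + l - 2) * (k`! * l`!) ->
  (k + l).+1 * (k + l) * (n - 2) ^ (k + l - 1) <= b ->
  a * ((k + l).+1 * 'C(k + l, k) * n ^ (k + l - 1))
    <= (k + l - 1) * ny * N ^ (k + l - 2) * b.
Proof.
set M := k + l => M_ge3 N_ge2 n_ge2N a_le b_ge.
have fac : 'C(M, k) * (k`! * l`!) = M * (M - 1) * (M - 2)`!.
  have := bin_fact (leq_addr l k); rewrite addKn => ->.
  by rewrite fact_sub2 // ltnW.
have bin : 'C(N - 2, M - 2) * (M - 2)`! <= (N - 2) ^ (M - 2).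
  by rewrite bin_ffact ffact_leq_expn.
have ratio : (N - 2) ^ (M - 2) * n ^ (M - 1) <= N ^ (M - 2) * (n - 2) ^ (M - 1).
  have := @ratio_expn_shift N n (M - 2) N_ge2 n_ge2N.
  by rewrite (_ : (M - 2).+1 = M - 1); lia.
set c := ny * M.+1 * (M * (M - 1)).
apply: (leq_trans (leq_mul a_le (leqnn _))).
have -> : ny * 'C(N - 2, M - 2) * (k`! * l`!) * (M.+1 * 'C(M, k) * n ^ (M - 1))
    = c * ('C(N - 2, M - 2) * (M - 2)`! * n ^ (M - 1)).
  transitivity (ny * 'C(N - 2, M - 2) * ('C(M, k) * (k`! * l`!)) * M.+1 * n ^ (M - 1)).
    by ring.
  by rewrite fac /c; ring.
apply: (leq_trans (leq_mul (leqnn c) (leq_mul bin (leqnn _)))).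
apply: (leq_trans (leq_mul (leqnn c) ratio)).
have -> : c * (N ^ (M - 2) * (n - 2) ^ (M - 1))
    = (M - 1) * ny * N ^ (M - 2) * (M.+1 * M * (n - 2) ^ (M - 1)) by rewrite /c; ring.
by rewrite leq_mul2l b_ge orbT.
Qed.

Local Open Scope ring_scope.

Lemma ler_nat_ratio (R : realFieldType) (a b c d : nat) : (0 < b)%N -> (0 < d)%N ->
  (a * d <= c * b)%N -> a%:R / b%:R <= c%:R / d%:R :> R.
Proof.
move=> b_gt0 d_gt0 cross.
by rewrite ler_pdivrMr ?ltr0n // mulrAC ler_pdivlMr ?ltr0n // -!natrM ler_nat.
Qed.

Lemma star_ratio_densities (R : realFieldType) (M C n N ny : nat) :
  (0 < n)%N -> (0 < C)%N -> (2 <= M)%N ->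
  ((M - 1) * ny * N ^ (M - 2))%:R / (M.+1 * C * n ^ (M - 1))%:R
    = (M - 1)%:R / ((M + 1)%:R * C%:R) * (ny%:R / n%:R) * (N%:R / n%:R) ^+ (M - 2) :> R.
Proof.
move=> n_gt0 C_gt0 M_ge2.
have -> : (M - 1 = (M - 2).+1)%N by lia.
rewrite !natrM !natrX exprS expr_div_n -addn1 natrD.
have n_neq0 : n%:R != 0 :> R by rewrite pnatr_eq0 -lt0n.
have C_neq0 : C%:R != 0 :> R by rewrite pnatr_eq0 -lt0n.
by field; rewrite expf_neq0 // n_neq0 C_neq0 natr1 pnatr_eq0.
Qed.

Section Densities.
Variables (R : realFieldType) (V : finType) (arc : rel V).

Lemma card_nbrs_nonnbrs x :
  (#|[set a in [set: V] | adjacent arc a x]| + #|x_nonnbrs arc x|)%N = #|V|.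
Proof.
rewrite -(cardsC [set a in [set: V] | adjacent arc a x]); congr (_ + _).
by apply: eq_card => v; rewrite !inE.
Qed.

Lemma density_x_nonnbrs x :
  #|x_nonnbrs arc x|%:R / #|V|%:R = 1 - rho arc R x.
Proof.
have n_gt0 : (0 < #|V|)%N by apply/card_gt0P; exists x.
rewrite /rho /rho_in -(card_nbrs_nonnbrs x) natrD.
by field; rewrite -natrD card_nbrs_nonnbrs pnatr_eq0 -lt0n.
Qed.

Lemma card_x_nonnbrs_half x : x \in Xset arc R -> (#|x_nonnbrs arc x|.*2 <= #|V|)%N.
Proof.
have n_gt0 : (0 < #|V|)%N by apply/card_gt0P; exists x.
rewrite inE /rho /rho_in ler_pdivlMr ?ltr0n // => half.
rewrite -(card_nbrs_nonnbrs x) natrD in half.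
by rewrite -(ler_nat R) -muln2 -(card_nbrs_nonnbrs x) natrM natrD; lra.
Qed.

Lemma Dmin_le_rho x : x \in Xset arc R -> Dmin arc R <= rho arc R x.
Proof. exact: bigmin_le_cond. Qed.

(* A vertex of Y has at most (alpha + beta) n neighbours: at most |X| of them
   lie in X and, by definition of beta, at most beta n lie in Y. *)
Lemma density_y_nbrs y : y \in Yset arc R ->
  #|y_nbrs arc y|%:R / #|V|%:R <= alpha arc R + betamax arc R.
Proof.
move=> yY; rewrite -(cardsID (Xset arc R) (y_nbrs arc y)) natrD mulrDl.
apply: lerD.
  rewrite ler_pM2r ?invr_gt0 ?ltr0n ?ler_nat ?subset_leq_card ?subsetIr //.
  by apply/card_gt0P; exists y.
apply: (le_trans (_ : _ <= rho_in arc R (Yset arc R) y)); last exact: le_bigmax_cond.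
rewrite /rho_in ler_pM2r ?invr_gt0 ?ltr0n ?ler_nat; last by apply/card_gt0P; exists y.
by apply/subset_leq_card/subsetP => v; rewrite !inE andbC.
Qed.

Lemma density_ratio_le x y (M C : nat) :
  x \in Xset arc R -> y \in Yset arc R -> (0 < C)%N -> (2 <= M)%N ->
  ((M - 1) * #|y_nbrs arc y| * #|x_nonnbrs arc x| ^ (M - 2))%:R
      / (M.+1 * C * #|V| ^ (M - 1))%:R
    <= (M - 1)%:R / ((M + 1)%:R * C%:R)
       * (alpha arc R + betamax arc R) * (1 - Dmin arc R) ^+ (M - 2).
Proof.
move=> xX yY C_gt0 M_ge2.
have n_gt0 : (0 < #|V|)%N by apply/card_gt0P; exists x.
rewrite star_ratio_densities //.
have x_density : #|x_nonnbrs arc x|%:R / #|V|%:R <= 1 - Dmin arc R.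
  by rewrite density_x_nonnbrs lerD2l lerN2 Dmin_le_rho.
have x_density_ge0 : 0 <= #|x_nonnbrs arc x|%:R / #|V|%:R :> R by rewrite divr_ge0.
apply: ler_pM.
- by rewrite mulr_ge0 // divr_ge0 // mulr_ge0.
- exact: exprn_ge0.
- by rewrite ler_wpM2l ?density_y_nbrs // divr_ge0 ?mulr_ge0.
- by apply: lerXn2r; rewrite ?nnegrE // (le_trans x_density_ge0).
Qed.

End Densities.

Unset Implicit Arguments.
Set Strict Implicit.
Set Printing Implicit Defensive.

Theorem claim4p5 (R : realFieldType) (k l : nat) (V : finType) (arc : rel V)
  (Hl : (1 <= l)%N) (Hlk : (l <= k)%N) (Hm : (6 <= k + l)%N)
  (Hloop : irreflexive arc) (x y : V)
  (Hx : x \in Xset arc R) (Hy : y \in Yset arc R) (Hxy : ~~ adjacent arc x y) :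
  s_prob arc R k l x y <=
    (k + l - 1)%:R / ((k + l + 1)%:R * ('C(k + l, k))%:R)
    * (alpha arc R + betamax arc R) * (1 - Dmin arc R) ^+ (k + l - 2).
Proof.
have x_ne_y : x != y by apply: contraTneq Hy => <-; rewrite inE Hx.
have N_ge2 : (2 <= #|x_nonnbrs arc x|)%N.
  by have := subset_leq_card (pair_sub_x_nonnbrs Hxy Hloop); rewrite cards2 x_ne_y.
have n_ge2N := card_x_nonnbrs_half Hx.
have maps_ge := @card_ffun_hitting_pair_lower 'I_(k + l).+1 _ _ _ x_ne_y.
rewrite card_ord subSS /= in maps_ge.
have {}maps_ge := maps_ge ltac:(lia).
have count := star_ratio_nat (leq_trans (isT : (3 <= 6)%N) Hm) N_ge2 n_ge2N
  (card_star_copies_through_leq k l x_ne_y Hxy Hloop) maps_ge.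
have C_gt0 : (0 < 'C(k + l, k))%N by rewrite bin_gt0 leq_addr.
have n_gt0 : (0 < #|V|)%N by apply/card_gt0P; exists x.
have lower_gt0 : (0 < (k + l).+1 * (k + l) * (#|V| - 2) ^ (k + l - 1))%N.
  by rewrite !muln_gt0 expn_gt0; lia.
have upper_gt0 : (0 < (k + l).+1 * 'C(k + l, k) * #|V| ^ (k + l - 1))%N.
  by rewrite !muln_gt0 expn_gt0 C_gt0 n_gt0.
have ratio := ler_nat_ratio R (leq_trans lower_gt0 maps_ge) upper_gt0 count.
apply: (le_trans ratio); apply: density_ratio_le Hx Hy C_gt0 _; lia.
Qed.
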